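(* Let $\pi$ be an $(m,n)$-parking function with priority forest $P$. Then (a) $\mathrm{lucky}(\pi)=\mathrm{sasc}(P)$, and (b) $\mathrm{probes}(\pi)=\mathrm{diff}(P)$.
   Context: $[n]=\{1,\dots,n\}$, $[n]_0=\{0,\dots,n\}$. An $(m,n)$-parking function is a map $\pi:[m]\to[n]$ such that when cars $1,\dots,m$ arrive in order to spots $1,\dots,n$ and car $i$ parks at the first empty spot $\ge\pi(i)$, all cars park. Its bird's eye permutation $\omega$ sends each occupied spot to the car parked there. Its priority forest $P$ is the rooted forest on $[n]_0$ in which each occupied spot $i$ is a non-root vertex with parent $\pi(\omega(i))-1$ and all other vertices are roots (it is a priority forest). A car is lucky if it parks at its preferred spot; $\mathrm{lucky}(\pi)$ is the number of lucky cars. $\mathrm{probes}(\pi)$ is the total number of parking attempts (successful or not) made by all cars. For a priority forest $P$ with shifted parent map $s_P(i)=p(i)+1$ ($p(i)$ the parent of non-root $i$): $\mathrm{sasc}(P)$ is the number of non-root vertices $i$ whose parent is $i-1$, and $\mathrm{diff}(P)=\sum_i(i-s_P(i)+1)$, summed over non-root vertices $i$. *)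

From mathcomp Require Import all_boot.
Set Implicit Arguments. Unset Strict Implicit. Unset Printing Implicit Defensive.

(* Conventions: spots are 1..n; vertices of the forest are 0..n.
   A preference list pi : seq nat of size m, pi`_(j) = pi(j+1) (cars 0-indexed
   in the seq, car j+1 of the paper is position j). *)

(* Returns Some (parking spot, number of attempts)
   or None if the car leaves the street. fuel bounds the search. *)
Fixpoint drive (n : nat) (occ : seq nat) (s fuel : nat) : option (nat * nat) :=
  match fuel with
  | 0 => None
  | fuel'.+1 =>
      if n < s then None
      else if s \in occ then
        omap (fun r => (r.1, r.2.+1)) (drive n occ s.+1 fuel')
      else Some (s, 1)
  end.

Fixpoint run (n : nat) (prefs occ : seq nat) : option (seq (nat * nat)) :=
  match prefs with
  | [::] => Some [::]
  | a :: ps =>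
      match drive n occ a n.+1 with
      | None => None
      | Some r => omap (cons r) (run n ps (r.1 :: occ))
      end
  end.

Definition is_parking_function (m n : nat) (pi : seq nat) : Prop :=
  [/\ size pi = m, all (fun a => 0 < a <= n) pi & run n pi [::] <> None].

Definition outcome (n : nat) (pi : seq nat) : seq (nat * nat) :=
  odflt [::] (run n pi [::]).

Definition spots (n : nat) (pi : seq nat) : seq nat := map fst (outcome n pi).

(* bird's eye permutation: occupied spot i |-> (0-indexed) car parked there *)
Definition birds_eye (n : nat) (pi : seq nat) (i : nat) : nat :=
  index i (spots n pi).

(* priority forest on [n]_0, given by its parent map (None = root):
   occupied spot i has parent pi(omega(i)) - 1 *)
Definition priority_forest (n : nat) (pi : seq nat) (i : nat) : option nat :=
  if i \in spots n pi then Some (nth 0 pi (birds_eye n pi i) - 1) else None.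

Definition lucky (n : nat) (pi : seq nat) : nat :=
  count (fun j => (nth (0, 0) (outcome n pi) j).1 == nth 0 pi j) (iota 0 (size pi)).

Definition probes (n : nat) (pi : seq nat) : nat :=
  \sum_(r <- outcome n pi) r.2.

(* statistics of a forest on [n]_0 given by a parent map; s_P(i) = p(i)+1 *)
Definition sasc (n : nat) (par : nat -> option nat) : nat :=
  count (fun i => if par i is Some p then p == i - 1 else false) (iota 0 n.+1).

Definition diff (n : nat) (par : nat -> option nat) : nat :=
  \sum_(i <- iota 0 n.+1)
     (if par i is Some p then (i - p.+1 + 1) else 0).

From mathcomp Require Import all_boot.
From mathcomp Require Import zify.

Set Implicit Arguments.
Unset Strict Implicit.

(* Car j with preference a parks at some spot i >= a after exactly i - a + 1
   probes, and its vertex i of the priority forest has parent a - 1.  Hence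
   car j is lucky iff i = a iff the parent of i is i - 1, and its probe count
   i - a + 1 is the contribution of i to diff.  Summing over cars is summing
   over occupied spots, since the spots of distinct cars are distinct. *)

Definition parks_after (n a : nat) (r : nat * nat) : Prop :=
  a <= r.1 <= n /\ r.2 = (r.1 - a).+1.

Lemma drive_spec n occ s fuel r :
  drive n occ s fuel = Some r -> r.1 \notin occ /\ parks_after n s r.
Proof.
rewrite /parks_after; elim: fuel s r => [|fuel IH] s r //=.
case: ltnP => // s_le_n; case: ifP => [s_occ | s_free [<-]]; last first.
  by rewrite s_free; split => //=; lia.
case E: drive => [[i k]|] //= [<-] /=.
by have [i_free [/= ? ->]] := IH _ _ E; split => //; lia.
Qed.

Arguments drive : simpl never.

Lemma run_spec n ps occ out : uniq occ -> run n ps occ = Some out ->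
  [/\ size out = size ps, uniq (map fst out ++ occ)
    & forall j, j < size ps -> parks_after n (nth 0 ps j) (nth (0, 0) out j)].
Proof.
elim: ps occ out => [|a ps IH] occ out occ_uniq /=; first by case=> <-.
case D: drive => [r|] //; have [r_free r_parks] := drive_spec D.
case R: run => [out'|] //= [<-].
have r_occ_uniq : uniq (r.1 :: occ) by rewrite /= r_free.
have [size_out' uniq_out' parks'] := IH _ _ r_occ_uniq R.
split=> [|| [|j] /= j_lt].
- by rewrite /= size_out'.
- by rewrite cat_cons -cat1s uniq_catCA.
- exact: r_parks.
- exact: parks'.
Qed.

Lemma big_mem_index (T : eqType) (R : Type) (idx : R) (op : Monoid.com_law idx)
    (r s : seq T) (x0 : T) (F : T -> nat -> R) :
  uniq r -> uniq s -> {subset s <= r} ->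
  \big[op/idx]_(x <- r | x \in s) F x (index x s) =
  \big[op/idx]_(0 <= j < size s) F (nth x0 s j) j.
Proof.
move=> r_uniq s_uniq s_sub_r; rewrite -big_filter.
have filter_perm : perm_eq [seq x <- r | x \in s] s.
  apply: uniq_perm; rewrite ?filter_uniq // => x.
  by rewrite mem_filter andb_idr //; apply: s_sub_r.
rewrite (perm_big _ filter_perm) (big_nth x0); apply: eq_big_nat => j /andP[_ j_lt].
by rewrite index_uniq.
Qed.

Section PriorityForestStatistics.

Variables (n : nat) (pi : seq nat) (out : seq (nat * nat)).
Hypothesis pi_pos : {in pi, forall a, 0 < a}.
Hypothesis run_pi : run n pi [::] = Some out.

Let spots_uniq : uniq (map fst out).
Proof. by case: (run_spec (occ := [::]) isT run_pi); rewrite cats0. Qed.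

Let size_out : size out = size pi.
Proof. by case: (run_spec (occ := [::]) isT run_pi). Qed.

Let car_parks j :
  j < size pi -> parks_after n (nth 0 pi j) (nth (0, 0) out j).
Proof. by case: (run_spec (occ := [::]) isT run_pi) => _ _; apply. Qed.

Let pref_pos j : j < size pi -> 0 < nth 0 pi j.
Proof. by move=> j_lt; apply/pi_pos/mem_nth. Qed.

Lemma sum_priority_forest (w : nat -> option nat -> nat) :
  (forall i, w i None = 0) ->
  \sum_(i <- iota 0 n.+1) w i (priority_forest n pi i) =
  \sum_(0 <= j < size pi) w (nth (0, 0) out j).1 (Some (nth 0 pi j - 1)).
Proof.
move=> w_root; have spotsE : spots n pi = map fst out.
  by rewrite /spots /outcome run_pi.
rewrite (eq_bigr (fun i => if i \in map fst out then
   w i (Some (nth 0 pi (index i (map fst out)) - 1)) else 0)); last first.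
  by move=> i _; rewrite /priority_forest /birds_eye spotsE; case: ifP.
rewrite -big_mkcond (big_mem_index _ 0
  (fun i k => w i (Some (nth 0 pi k - 1)))) ?iota_uniq //.
  rewrite size_map size_out; apply: eq_big_nat => j /andP[_ j_lt].
  by rewrite (nth_map (0, 0)) // size_out.
move=> _ /mapP[r /(nthP (0, 0)) [j j_lt <-] ->]; rewrite mem_iota.
by rewrite size_out in j_lt; have [/andP[_ ?] _] := car_parks j_lt.
Qed.

Lemma sasc_priority_forest :
  sasc n (priority_forest n pi) =
  count (fun j => (nth (0, 0) out j).1 == nth 0 pi j) (iota 0 (size pi)).
Proof.
rewrite /sasc -!sum1_count big_mkcond.
rewrite (@sum_priority_forest
  (fun i o => if (if o is Some p then p == i - 1 else false) then 1 else 0)) //.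
rewrite [RHS]big_mkcond /index_iota subn0.
apply: eq_big_seq => j; rewrite mem_iota => j_lt.
have [] := car_parks j_lt; have := pref_pos j_lt.
move: (nth 0 pi j) (nth _ out j) => a [i k] /= a_pos i_range _.
by congr (if _ then _ else _); apply/eqP/eqP; lia.
Qed.

Lemma diff_priority_forest :
  diff n (priority_forest n pi) = \sum_(r <- out) r.2.
Proof.
rewrite /diff (@sum_priority_forest
  (fun i o => if o is Some p then i - p.+1 + 1 else 0)) //.
rewrite (big_nth (0, 0)) size_out; apply: eq_big_nat => j /andP[_ j_lt].
by have [] := car_parks j_lt; have := pref_pos j_lt; lia.
Qed.

End PriorityForestStatistics.

Theorem lemma4p4 (m n : nat) (pi : seq nat) :
  is_parking_function m n pi ->
  lucky n pi = sasc n (priority_forest n pi) /\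
  probes n pi = diff n (priority_forest n pi).
Proof.
move=> [_ prefs_ok run_ok]; case E: (run n pi [::]) => [out|] //.
have pi_pos : {in pi, forall a, 0 < a} by move=> a /(allP prefs_ok) /andP[].
have outE : outcome n pi = out by rewrite /outcome E.
by rewrite /lucky /probes outE (sasc_priority_forest pi_pos E)
  (diff_priority_forest pi_pos E).
Qed.
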